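(* Suppose $F$ is symmetric ($F(-i)=1-F(i)$ for all $i$), and consider the infinite-learning recommendation system with threshold $R\in(0,1)$. Let $\lambda=q_1/q_2$, $\sigma=q_H/q_L$ and, for $\lambda\ne1$, $\tilde i_\infty=\frac{(\sigma-1)(\lambda+1)}{2(1+\sigma)(\lambda-1)}$. Then (i) every receiver type $i\in[-1/2,1/2]$ buys the product if it is good; (ii) no receiver type buys the product if it is bad; (iii) if the product is controversial, then (a) if $\lambda>1$, all receiver types $i\ge\tilde i_\infty$ buy the product; (b) if $\lambda<1$, all receiver types $i\le\tilde i_\infty$ buy the product; (c) if $\lambda=1$, all receiver types buy the product if $\sigma\le1$ and none buys it if $\sigma>1$.
   Context: Setting. Consumer types are $i\in[-1/2,1/2]$, distributed according to a continuous cumulative distribution function $F$ with full support on $[-1/2,1/2]$. A product has a quality vector $(Q_1,Q_2)\in\{0,1\}^2$; a type-$i$ consumer gets payoff $(1/2+i)Q_1+(1/2-i)Q_2$. Version $(1,1)$ is called good, $(0,0)$ bad, and $(1,0),(0,1)$ controversial; their prior probabilities are $q_H,q_1,q_2,q_L$ (for $(1,1),(1,0),(0,1),(0,0)$), all strictly positive and summing to $1$. Given a threshold $R\in(0,1)$, each sender, with type drawn independently from $F$, gives a buy recommendation if her payoff from the product is at least $R$ and a don't-buy recommendation otherwise. In the infinite-learning system the receiver observes the recommendations of infinitely many such independent senders; this reveals whether the product is good, bad or controversial, and if controversial the receiver's posterior on $(1,0),(0,1)$ is $(q_1/(q_1+q_2),q_2/(q_1+q_2))$. The receiver of type $i$ buys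 the recommended product if its posterior expected payoff is at least $U_i^0=q_H+(1/2+i)q_1+(1/2-i)q_2$, the expected payoff of an unrecommended alternative, and otherwise buys the alternative. *)

From Stdlib Require Import Reals Lra.
Open Scope R_scope.

(* Quality versions: Good = (1,1), C10 = (1,0), C01 = (0,1), Bad = (0,0). *)
Inductive version := Good | C10 | C01 | Bad.

Definition Q1 (v : version) : R :=
  match v with Good | C10 => 1 | _ => 0 end.
Definition Q2 (v : version) : R :=
  match v with Good | C01 => 1 | _ => 0 end.

Definition payoff (i : R) (v : version) : R :=
  (1/2 + i) * Q1 v + (1/2 - i) * Q2 v.

Definition is_type_cdf (F : R -> R) : Prop :=
  (forall x y, x <= y -> F x <= F y) /\
  continuity F /\
  (forall x, x <= -1/2 -> F x = 0) /\
  (forall x, 1/2 <= x -> F x = 1) /\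
  (forall x y, -1/2 <= x -> x < y -> y <= 1/2 -> F x < F y).

Definition symmetric_cdf (F : R -> R) : Prop :=
  forall i, -1/2 <= i <= 1/2 -> F (- i) = 1 - F i.

Definition recommends (Rthr s : R) (v : version) : Prop := payoff s v >= Rthr.

(* Receiver's posterior over versions in the infinite-learning system, given
   the true version v: good and bad are revealed; a controversial version
   yields posterior (q1/(q1+q2), q2/(q1+q2)) on ((1,0),(0,1)). *)
Definition inf_posterior (q1 q2 : R) (v : version) (w : version) : R :=
  match v with
  | Good => match w with Good => 1 | _ => 0 end
  | Bad => match w with Bad => 1 | _ => 0 end
  | C10 | C01 => match w with
                 | C10 => q1 / (q1 + q2)
                 | C01 => q2 / (q1 + q2)
                 | _ => 0 end
  end.

Definition post_payoff (q1 q2 i : R) (v : version) : R :=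
  inf_posterior q1 q2 v Good * payoff i Good
  + inf_posterior q1 q2 v C10 * payoff i C10
  + inf_posterior q1 q2 v C01 * payoff i C01
  + inf_posterior q1 q2 v Bad * payoff i Bad.

(* expected payoff of the unrecommended alternative *)
Definition U0 (qH q1 q2 i : R) : R := qH + (1/2 + i) * q1 + (1/2 - i) * q2.

Definition buys (qH q1 q2 i : R) (v : version) : Prop :=
  post_payoff q1 q2 i v >= U0 qH q1 q2 i.

(** Infinite learning reveals the version.  A good product pays [1 > U0 i], a bad one
    pays [0 < U0 i].  For a controversial one, the payoff gap is a positive
    multiple of [i * 2 (1 + sig) (lam - 1) - (lam + 1) (sig - 1)], affine in
    [i] with slope of the sign of [lam - 1] and root [itil]. *)
From Stdlib Require Import Reals Lra.
Open Scope R_scope.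

Definition controversial (v : version) : Prop := v = C10 \/ v = C01.

Lemma post_payoff_Good q1 q2 i : post_payoff q1 q2 i Good = 1.
Proof. unfold post_payoff, inf_posterior, payoff, Q1, Q2; field. Qed.

Lemma post_payoff_Bad q1 q2 i : post_payoff q1 q2 i Bad = 0.
Proof. unfold post_payoff, inf_posterior, payoff, Q1, Q2; field. Qed.

Lemma post_payoff_controversial q1 q2 i v : controversial v ->
  post_payoff q1 q2 i v = ((1/2 + i) * q1 + (1/2 - i) * q2) / (q1 + q2).
Proof.
  intros [-> | ->]; unfold post_payoff, inf_posterior, payoff, Q1, Q2, Rdiv; ring.
Qed.

Section Receiver.

Variables qH q1 q2 qL : R.
Hypotheses (qH_gt0 : 0 < qH) (q1_gt0 : 0 < q1) (q2_gt0 : 0 < q2)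
  (qL_gt0 : 0 < qL) (q_sum1 : qH + q1 + q2 + qL = 1).

Lemma U0_gt0 i : -1/2 <= i <= 1/2 -> 0 < U0 qH q1 q2 i.
Proof. intros Hi; unfold U0; nra. Qed.

Lemma U0_lt1 i : -1/2 <= i <= 1/2 -> U0 qH q1 q2 i < 1.
Proof. intros Hi; unfold U0; nra. Qed.

Lemma buys_Good i : -1/2 <= i <= 1/2 -> buys qH q1 q2 i Good.
Proof.
  intros Hi; unfold buys; rewrite post_payoff_Good.
  apply Rle_ge, Rlt_le, U0_lt1, Hi.
Qed.

Lemma not_buys_Bad i : -1/2 <= i <= 1/2 -> ~ buys qH q1 q2 i Bad.
Proof.
  intros Hi; unfold buys; rewrite post_payoff_Bad.
  apply Rlt_not_ge, U0_gt0, Hi.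
Qed.

Lemma controversial_payoff_gap i v : controversial v ->
  post_payoff q1 q2 i v - U0 qH q1 q2 i =
  q2 * qL / (2 * (q1 + q2)) *
  (i * (2 * (1 + qH / qL) * (q1 / q2 - 1)) - (q1 / q2 + 1) * (qH / qL - 1)).
Proof.
  intros Hv; rewrite (post_payoff_controversial _ _ _ _ Hv); unfold U0.
  replace qH with (1 - q1 - q2 - qL) by lra.
  field; lra.
Qed.

Lemma buys_controversialE i v : controversial v ->
  buys qH q1 q2 i v <->
  (q1 / q2 + 1) * (qH / qL - 1) <= i * (2 * (1 + qH / qL) * (q1 / q2 - 1)).
Proof.
  intros Hv; unfold buys.
  assert (Hc : 0 < q2 * qL / (2 * (q1 + q2))).
  { apply Rdiv_lt_0_compat; [apply Rmult_lt_0_compat | ]; lra. }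
  pose proof (controversial_payoff_gap i v Hv) as Hgap.
  set (gap := i * (2 * (1 + qH / qL) * (q1 / q2 - 1)) - (q1 / q2 + 1) * (qH / qL - 1)) in Hgap.
  split; intros H.
  - assert (0 <= gap).
    { apply (Rmult_le_reg_l _ _ _ Hc); rewrite Rmult_0_r; lra. }
    unfold gap in *; lra.
  - assert (0 <= q2 * qL / (2 * (q1 + q2)) * gap).
    { apply Rmult_le_pos; unfold gap; lra. }
    lra.
Qed.

End Receiver.

Theorem lemma4 (F : R -> R) (Rthr qH q1 q2 qL : R) :
  is_type_cdf F -> symmetric_cdf F ->
  0 < Rthr < 1 ->
  0 < qH -> 0 < q1 -> 0 < q2 -> 0 < qL -> qH + q1 + q2 + qL = 1 ->
  let lam := q1 / q2 in
  let sig := qH / qL in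
  let itil := (sig - 1) * (lam + 1) / (2 * (1 + sig) * (lam - 1)) in
  (forall i, -1/2 <= i <= 1/2 -> buys qH q1 q2 i Good) /\
  (forall i, -1/2 <= i <= 1/2 -> ~ buys qH q1 q2 i Bad) /\
  (forall v, (v = C10 \/ v = C01) ->
     (lam > 1 -> forall i, -1/2 <= i <= 1/2 -> itil <= i -> buys qH q1 q2 i v) /\
     (lam < 1 -> forall i, -1/2 <= i <= 1/2 -> i <= itil -> buys qH q1 q2 i v) /\
     (lam = 1 ->
        (sig <= 1 -> forall i, -1/2 <= i <= 1/2 -> buys qH q1 q2 i v) /\
        (sig > 1 -> forall i, -1/2 <= i <= 1/2 -> ~ buys qH q1 q2 i v))).
Proof.
  intros _ _ _ hH h1 h2 hL hs lam sig itil.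
  split; [exact (buys_Good qH q1 q2 qL h1 h2 hL hs) |].
  split; [exact (not_buys_Bad qH q1 q2 hH h1 h2) |].
  intros v Hv.
  pose proof (buys_controversialE qH q1 q2 qL h1 h2 hL hs) as Hbuys.
  set (D := 2 * (1 + sig) * (lam - 1)).
  assert (sig_gt0 : 0 < sig) by (apply Rdiv_lt_0_compat; lra).
  assert (itil_scaled : lam <> 1 -> itil * D = (lam + 1) * (sig - 1)).
  { intros Hlam; unfold itil, D; field; split; lra. }
  split; [| split].
  - intros Hlam i _ Hi; apply (Hbuys i v Hv); fold lam sig D.
    assert (0 < D) by (unfold D; nra).
    rewrite <- itil_scaled by lra; nra.
  - intros Hlam i _ Hi; apply (Hbuys i v Hv); fold lam sig D.
    assert (D < 0) by (unfold D; nra).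
    rewrite <- itil_scaled by lra; nra.
  - intros Hlam; split.
    + intros Hsig i _; apply (Hbuys i v Hv); fold lam sig; rewrite Hlam; lra.
    + intros Hsig i _ Hb; apply (Hbuys i v Hv) in Hb; fold lam sig in Hb.
      rewrite Hlam in Hb; lra.
Qed.
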